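(* Let $A=(a_{ij})_{1\le i,j\le n}$ be a complex Nekrasov matrix, and let $k\in\{1,\dots,n\}$ be the smallest index such that $a_{kj}=0$ for all $j>k$. Then there exist real numbers $\epsilon_1,\dots,\epsilon_n$ satisfying $$\epsilon_i=0 \text{ for } i=1,\dots,k-1,\qquad 0<\epsilon_i<|a_{ii}|-h_i(A)\ \text{ and }\ \epsilon_i>\sum_{j=k}^{i-1}\frac{|a_{ij}|\,\epsilon_j}{|a_{jj}|}\ \text{ for } i=k,\dots,n$$ (the sum being empty for $i=k$), and for any such numbers the diagonal matrix $S=\mathrm{diag}(s_1,\dots,s_n)$ with $s_i:=\frac{h_i(A)+\epsilon_i}{|a_{ii}|}$ has positive diagonal entries and $AS$ is strictly diagonally dominant by rows.
   Context: For a complex $n\times n$ matrix $A=(a_{ij})$ with $a_{ii}\ne 0$ for all $i$, define recursively $h_1(A):=\sum_{j\ne 1}|a_{1j}|$ and $h_i(A):=\sum_{j=1}^{i-1}|a_{ij}|\frac{h_j(A)}{|a_{jj}|}+\sum_{j=i+1}^{n}|a_{ij}|$ for $i=2,\dots,n$. $A$ is a Nekrasov matrix if $|a_{ii}|>h_i(A)$ for all $i\in\{1,\dots,n\}$. A matrix $B=(b_{ij})$ is strictly diagonally dominant by rows (SDD) if $|b_{ii}|>\sum_{j\ne i}|b_{ij}|$ for all $i$. *)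

From HB Require Import structures.
From mathcomp Require Import all_boot all_order all_algebra.
From mathcomp Require Import complex.
Set Implicit Arguments. Unset Strict Implicit. Unset Printing Implicit Defensive.
Import Order.TTheory GRing.Theory Num.Theory.
Local Open Scope ring_scope.

(* Complex numbers: R[i] over a real closed field R (R = the reals gives C).
   Modulus |z| : R is Normc.normc z. Indices 'I_n are 0-based (i ~ i+1). *)
Definition cabs (R : rcfType) (z : R[i]) : R := Normc.normc z.

(* h_i(A) via fuel m; correct as soon as m > i; we use fuel n. *)
Fixpoint nek_hN (R : rcfType) (n : nat) (A : 'M[R[i]]_n) (m : nat) (i : 'I_n) : R :=
  match m with
  | 0 => 0
  | m'.+1 =>
      \sum_(j < n | (j < i)%N) cabs (A i j) * nek_hN A m' j / cabs (A j j)
      + \sum_(j < n | (i < j)%N) cabs (A i j)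
  end.

Definition nek_h (R : rcfType) (n : nat) (A : 'M[R[i]]_n) (i : 'I_n) : R :=
  nek_hN A n i.

Definition nekrasov (R : rcfType) (n : nat) (A : 'M[R[i]]_n) : Prop :=
  forall i : 'I_n, A i i != 0 /\ nek_h A i < cabs (A i i).

Definition SDD (R : rcfType) (n : nat) (B : 'M[R[i]]_n) : Prop :=
  forall i : 'I_n, \sum_(j < n | j != i) cabs (B i j) < cabs (B i i).

Definition nek_eps_ok (R : rcfType) (n : nat) (A : 'M[R[i]]_n) (k : 'I_n)
    (eps : 'I_n -> R) : Prop :=
  forall i : 'I_n,
    ((i < k)%N -> eps i = 0) /\
    ((k <= i)%N ->
       [/\ 0 < eps i, eps i < cabs (A i i) - nek_h A i &
           \sum_(j < n | (k <= j < i)%N) cabs (A i j) * eps j / cabs (A j j) < eps i]).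

Definition nek_s (R : rcfType) (n : nat) (A : 'M[R[i]]_n) (eps : 'I_n -> R)
    (i : 'I_n) : R :=
  (nek_h A i + eps i) / cabs (A i i).

From HB Require Import structures.
From mathcomp Require Import all_boot all_order all_algebra.
From mathcomp Require Import complex.
From mathcomp Require Import zify lra.
Import Order.TTheory GRing.Theory Num.Theory.
Local Open Scope ring_scope.
Set Implicit Arguments. Unset Strict Implicit.

(* With s_i = (h_i + eps_i) / |a_ii|, the i-th diagonal entry of AS has modulus
   h_i + eps_i, and by the recursion defining h_i the off-diagonal row sum of AS
   exceeds h_i by  sum_{j<i} |a_ij| eps_j / |a_jj| - sum_{j>i} |a_ij| (1 - s_j).
   Since eps_j < |a_jj| - h_j we have s_j < 1, so the second sum is >= 0.  For
   i >= k the first sum is < eps_i by the choice of eps; for i < k both eps_i and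
   the first sum vanish, and the second sum is > 0 because row i has a nonzero
   entry right of the diagonal (minimality of k).  Suitable eps exist: solve the
   triangular system t_i = sum_{k<=j<i} |a_ij| t_j / |a_jj| + 1 and scale t down
   until it fits under the gaps |a_ii| - h_i. *)

Section Modulus.
Variable R : rcfType.

Lemma cabs_ge0 (z : R[i]) : 0 <= cabs z.
Proof. by case: z => a b; apply: sqrtr_ge0. Qed.

Lemma cabs_gt0 (z : R[i]) : z != 0 -> 0 < cabs z.
Proof.
move=> z_neq0; rewrite lt_def cabs_ge0 andbT.
exact: (contra_neq (@Normc.eq0_normc R z)).
Qed.

Lemma cabsM (x y : R[i]) : cabs (x * y) = cabs x * cabs y.
Proof. exact: Normc.normcM. Qed.

Lemma cabs_real (x : R) : 0 <= x -> cabs x%:C%C = x.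
Proof. by move=> x_ge0; rewrite /cabs /= expr0n addr0 sqrtr_sqr ger0_norm. Qed.

Lemma cabs_weight_ge0 (a b : R[i]) (x : R) : 0 <= x -> 0 <= cabs a * x / cabs b.
Proof. by move=> x_ge0; rewrite divr_ge0 ?mulr_ge0 ?cabs_ge0. Qed.

End Modulus.

Lemma ler_ltr_sum (R : numDomainType) (I : finType) (P : pred I) (F G : I -> R) :
  (forall j, P j -> F j <= G j) -> (exists2 j, P j & F j < G j) ->
  \sum_(j | P j) F j < \sum_(j | P j) G j.
Proof.
move=> le_FG [l Pl lt_FGl]; rewrite (bigD1 l) // [ltRHS](bigD1 l) //=.
by apply: ltr_leD => //; apply: ler_sum => j /andP[Pj _]; apply: le_FG.
Qed.

Lemma sum_neq_ord_split (V : nmodType) (n : nat) (i : 'I_n) (F : 'I_n -> V) :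
  \sum_(j < n | j != i) F j =
  \sum_(j < n | (j < i)%N) F j + \sum_(j < n | (i < j)%N) F j.
Proof.
rewrite (bigID (fun j : 'I_n => (j < i)%N)) /=.
by congr (_ + _); apply: eq_bigl => j; rewrite -val_eqE /=; case: ltngtP.
Qed.

Section FuelRecursion.
Variables (T : Type) (n : nat) (step : ('I_n -> T) -> 'I_n -> T).
Variable f : nat -> 'I_n -> T.
Hypothesis step_lower : forall (g g' : 'I_n -> T) (i : 'I_n),
  (forall j : 'I_n, (j < i)%N -> g j = g' j) -> step g i = step g' i.
Hypothesis fS : forall m, f m.+1 =1 step (f m).

Lemma fuel_stable m1 m2 (i : 'I_n) : (i < m1)%N -> (i < m2)%N -> f m1 i = f m2 i.
Proof.
elim: m1 m2 i => [|m1 IH] [|m2] i // lt_i_m1 lt_i_m2.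
by rewrite !fS; apply: step_lower => j lt_ji; apply: IH; lia.
Qed.

Lemma fuel_fixpoint (i : 'I_n) : f n i = step (f n) i.
Proof.
have lt_i_n := ltn_ord i.
have -> : f n i = f n.-1.+1 i by rewrite prednK //; lia.
rewrite fS; apply: step_lower => j lt_ji.
by apply: fuel_stable; move: (ltn_ord j); lia.
Qed.

End FuelRecursion.

Section Nekrasov.
Variables (R : rcfType) (n : nat) (A : 'M[R[i]]_n).

Definition nek_h_step (g : 'I_n -> R) (i : 'I_n) : R :=
  \sum_(j < n | (j < i)%N) cabs (A i j) * g j / cabs (A j j)
  + \sum_(j < n | (i < j)%N) cabs (A i j).

Lemma nek_hE (i : 'I_n) : nek_h A i = nek_h_step (nek_h A) i.
Proof.
apply: (fuel_fixpoint (f := nek_hN A)) => // g g' {}i eq_gg'.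
by congr (_ + _); apply: eq_bigr => j /eq_gg' ->.
Qed.

Lemma nek_h_ge0 (i : 'I_n) : 0 <= nek_h A i.
Proof.
suff hN_ge0 m : forall j, 0 <= nek_hN A m j by apply: hN_ge0.
elim: m => [|m IH] j //=.
by apply: addr_ge0; apply: sumr_ge0 => l _; rewrite ?cabs_weight_ge0 ?cabs_ge0.
Qed.

Lemma nek_h_gt0 (i : 'I_n) :
  (exists j : 'I_n, (i < j)%N /\ A i j != 0) -> 0 < nek_h A i.
Proof.
case=> l [lt_il Ail_neq0]; rewrite nek_hE ltr_wpDl //.
  by apply: sumr_ge0 => j _; rewrite cabs_weight_ge0 ?nek_h_ge0.
rewrite (bigD1 l) //= ltr_pwDl ?cabs_gt0 //.
by apply: sumr_ge0 => j _; apply: cabs_ge0.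
Qed.

Variable k : 'I_n.

Definition eps_step (g : 'I_n -> R) (i : 'I_n) : R :=
  \sum_(j < n | (k <= j < i)%N) cabs (A i j) * g j / cabs (A j j) + 1.

Definition eps_profile : 'I_n -> R := iter n eps_step (fun=> 0).

Lemma eps_profileE (i : 'I_n) : eps_profile i = eps_step eps_profile i.
Proof.
apply: (fuel_fixpoint (f := fun m => iter m eps_step (fun=> 0))) => // g g' {}i eq_gg'.
by congr (_ + _); apply: eq_bigr => j /andP[_ /eq_gg'] ->.
Qed.

Lemma eps_profile_gt0 (i : 'I_n) : 0 < eps_profile i.
Proof.
rewrite eps_profileE ltr_wpDl //; apply: sumr_ge0 => j _.
apply: cabs_weight_ge0.
suff iter_ge0 m : forall l, 0 <= iter m eps_step (fun=> 0) l by apply: iter_ge0.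
elim: m => [|m IH] l //=.
by apply: addr_ge0 => //; apply: sumr_ge0 => l' _; apply: cabs_weight_ge0.
Qed.

Lemma nek_eps_exists : nekrasov A -> exists eps : 'I_n -> R, nek_eps_ok A k eps.
Proof.
move=> nekA; pose gap i := cabs (A i i) - nek_h A i.
have gap_gt0 i : 0 < gap i by rewrite subr_gt0; case: (nekA i).
pose S := \sum_(i < n) eps_profile i / gap i.
have S_ge0 : 0 <= S.
  by apply: sumr_ge0 => i _; rewrite divr_ge0 // ltW ?eps_profile_gt0.
pose delta := (1 + S)^-1.
have delta_gt0 : 0 < delta by rewrite invr_gt0 ltr_wpDr.
exists (fun i : 'I_n => if (k <= i)%N then delta * eps_profile i else 0) => i.
split=> [lt_ik|le_ki]; first by rewrite leqNgt lt_ik.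
rewrite le_ki; split.
- by rewrite mulr_gt0 ?eps_profile_gt0.
- have : eps_profile i / gap i <= S.
    rewrite /S (bigD1 i) //= lerDl; apply: sumr_ge0 => j _.
    by rewrite divr_ge0 // ltW ?eps_profile_gt0.
  rewrite ler_pdivrMr // => le_t_S.
  rewrite mulrC ltr_pdivrMr ?ltr_wpDr //; apply: (le_lt_trans le_t_S).
  by rewrite -/(gap i) mulrC ltr_pM2l ?gap_gt0 // ltrDr.
- have -> : \sum_(j < n | (k <= j < i)%N)
      cabs (A i j) * (if (k <= j)%N then delta * eps_profile j else 0) / cabs (A j j)
    = delta * \sum_(j < n | (k <= j < i)%N) cabs (A i j) * eps_profile j / cabs (A j j).
    by rewrite mulr_sumr; apply: eq_bigr => j /andP[-> _]; rewrite mulrCA !mulrA.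
  by rewrite ltr_pM2l // [ltRHS]eps_profileE ltrDl.
Qed.

Section Scaling.
Variable eps : 'I_n -> R.
Hypothesis nekA : nekrasov A.
Hypothesis eps_ok : nek_eps_ok A k eps.
Hypothesis k_min : forall k' : 'I_n, (k' < k)%N ->
  exists j : 'I_n, (k' < j)%N /\ A k' j != 0.

Let s := nek_s A eps.

Lemma diag_gt0 (i : 'I_n) : 0 < cabs (A i i).
Proof. by apply: cabs_gt0; case: (nekA i). Qed.

Lemma eps_eq0 (i : 'I_n) : (i < k)%N -> eps i = 0.
Proof. by case: (eps_ok i) => + _; apply. Qed.

Lemma nek_s_lt1 (i : 'I_n) : s i < 1.
Proof.
rewrite /s /nek_s ltr_pdivrMr ?diag_gt0 // mul1r -ltrBrDl.
case: (leqP k i) => [le_ki | /eps_eq0 ->]; first by case: (eps_ok i) => _ /(_ le_ki) [].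
by rewrite subr_gt0; case: (nekA i).
Qed.

Lemma nek_s_gt0 (i : 'I_n) : 0 < s i.
Proof.
rewrite /s /nek_s divr_gt0 ?diag_gt0 //.
case: (leqP k i) => [le_ki | lt_ik].
  by rewrite ltr_wpDl ?nek_h_ge0 //; case: (eps_ok i) => _ /(_ le_ki) [].
by rewrite eps_eq0 // addr0; apply/nek_h_gt0/k_min.
Qed.

Let AS := A *m diag_mx (\row_i (s i)%:C%C).

Lemma scaled_entry_cabs (i j : 'I_n) : cabs (AS i j) = cabs (A i j) * s j.
Proof. by rewrite /AS mul_mx_diag !mxE cabsM cabs_real // ltW ?nek_s_gt0. Qed.

Lemma scaled_diag_cabs (i : 'I_n) : cabs (AS i i) = nek_h A i + eps i.
Proof. by rewrite scaled_entry_cabs /s /nek_s mulrC divfK // lt0r_neq0 ?diag_gt0. Qed.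

Lemma lower_scaled_sum (i : 'I_n) :
  \sum_(j < n | (j < i)%N) cabs (A i j) * s j =
  \sum_(j < n | (j < i)%N) cabs (A i j) * nek_h A j / cabs (A j j)
  + \sum_(j < n | (j < i)%N) cabs (A i j) * eps j / cabs (A j j).
Proof. by rewrite -big_split; apply: eq_bigr => j _; rewrite mulrA mulrDr mulrDl. Qed.

Lemma lower_eps_sumE (i : 'I_n) :
  \sum_(j < n | (j < i)%N) cabs (A i j) * eps j / cabs (A j j) =
  \sum_(j < n | (k <= j < i)%N) cabs (A i j) * eps j / cabs (A j j).
Proof.
rewrite (bigID (fun j : 'I_n => (k <= j)%N)) /= [X in _ + X]big1; last first.
  by move=> j /andP[_]; rewrite -ltnNge => /eps_eq0 ->; rewrite mulr0 mul0r.
by rewrite addr0; apply: eq_bigl => j; rewrite andbC.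
Qed.

Lemma upper_scaled_sum_le (i : 'I_n) :
  \sum_(j < n | (i < j)%N) cabs (A i j) * s j <= \sum_(j < n | (i < j)%N) cabs (A i j).
Proof.
apply: ler_sum => j _; rewrite ler_piMr ?cabs_ge0 //.
exact: ltW (nek_s_lt1 j).
Qed.

Lemma upper_scaled_sum_lt (i : 'I_n) : (i < k)%N ->
  \sum_(j < n | (i < j)%N) cabs (A i j) * s j < \sum_(j < n | (i < j)%N) cabs (A i j).
Proof.
move=> /k_min [l [lt_il Ail_neq0]]; apply: ler_ltr_sum.
  by move=> j _; rewrite ler_piMr ?cabs_ge0 // ltW ?nek_s_lt1.
by exists l; rewrite // gtr_pMr ?cabs_gt0 ?nek_s_lt1.
Qed.

Lemma scaled_SDD : SDD AS.
Proof.
move=> i; rewrite scaled_diag_cabs.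
under eq_bigr => j _ do rewrite scaled_entry_cabs.
rewrite sum_neq_ord_split lower_scaled_sum lower_eps_sumE [in ltRHS]nek_hE /nek_h_step.
case: (leqP k i) => [le_ki | lt_ik].
  case: (eps_ok i) => _ /(_ le_ki) [_ _ lt_sum_eps].
  by have := upper_scaled_sum_le i; lra.
have no_eps_terms : \sum_(j < n | (k <= j < i)%N) cabs (A i j) * eps j / cabs (A j j) = 0.
  by apply: big1 => j /andP[le_kj lt_ji]; lia.
by rewrite no_eps_terms eps_eq0 //; have := upper_scaled_sum_lt lt_ik; lra.
Qed.

End Scaling.
End Nekrasov.

Theorem theorem2p2 (R : rcfType) (n : nat) (A : 'M[R[i]]_n) (k : 'I_n) :
  nekrasov A ->
  (forall j : 'I_n, (k < j)%N -> A k j = 0) ->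
  (forall k' : 'I_n, (k' < k)%N -> exists j : 'I_n, (k' < j)%N /\ A k' j != 0) ->
  (exists eps : 'I_n -> R, nek_eps_ok A k eps) /\
  (forall eps : 'I_n -> R, nek_eps_ok A k eps ->
     (forall i : 'I_n, 0 < nek_s A eps i) /\
     SDD (A *m diag_mx (\row_i ((nek_s A eps i)%:C)%C))).
Proof.
move=> nekA _ k_min; split; first exact: nek_eps_exists.
move=> eps eps_ok; split=> [i|]; [exact: nek_s_gt0 | exact: scaled_SDD].
Qed.
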